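(* Let $\mathbf A$ be an interior $r\ell u$-groupoid, $\mathbf B$ a partial subalgebra of $\mathbf A$, and let $(eq)$ be any one of the equations $(\mathsf e),(\mathsf c),(\mathsf i),(!\mathsf c),(!\mathsf e),(!\mathsf i),(!\mathsf a1),(!\mathsf a2)$. If $(eq)$ holds in $\mathbf A$, then it also holds in $\mathbf F^+_{\mathbf A,\mathbf B}$. (The same holds for an interior $r\ell uz$-groupoid $\mathbf A$, with $\mathbf F_{\mathbf A,\mathbf B}$ regarded as an enriched $ruz$-frame for any choice of $\epsilon\in T_B$; the listed equations do not involve $0$.)
   Context: An $r\ell u$-groupoid is an algebra $(A,\wedge,\vee,\cdot,\backslash,/,1)$ with $(A,\wedge,\vee)$ a lattice (order $\le$), $(A,\cdot,1)$ a unital groupoid (binary operation, not necessarily associative, with two-sided unit $1$), and $x\cdot y\le z\iff y\le x\backslash z\iff x\le z/y$; an $r\ell uz$-groupoid additionally has an arbitrary constant $0$. An interior one has a unary $!$ with $1\le !1$, $!x\cdot!y\le !(x\cdot y)$, $!x\le x$, $!x\le !!x$, $x\le y\Rightarrow !x\le !y$. Equations: $(\mathsf e)$ $x\cdot y\le y\cdot x$; $(\mathsf c)$ $x\le x\cdot x$; $(\mathsf i)$ $x\le 1$; $(!\mathsf i)$ $!x\le 1$; $(!\mathsf c)$ $!x\le !x\cdot !x$; $(!\mathsf e)$ $!x\cdot y=y\cdot !x$; $(!\mathsf a1)$ $!x\cdot(y\cdot z)=(!x\cdot y)\cdot z$; $(!\mathsf a2)$ $x\cdot(y\cdot !z)=(x\cdot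 y)\cdot !z$. A partial subalgebra $\mathbf B$ of $\mathbf A$ is a subset $B$ with $f^{\mathbf B}(\vec b)=f^{\mathbf A}(\vec b)$ if this lies in $B$, undefined otherwise. Enriched $ru$-frame: $(G,T,N,K)$ with $(G,\cdot,\varepsilon)$ a unital groupoid, $T$ a set, $N\subseteq G\times T$ nuclear (for all $x,y\in G,z\in T$ there are $x\backslash\!\!\backslash z, z/\!\!/y\in T$ with $x\cdot y\,N\,z\iff y\,N\,x\backslash\!\!\backslash z\iff x\,N\,z/\!\!/y$), $K$ a sub-unital-groupoid of $G$; an enriched $ruz$-frame additionally has $\epsilon\in T$. $X^{\rhd}=\{t\mid\forall x\in X\,xNt\}$, $Y^{\lhd}=\{g\mid\forall y\in Y\,gNy\}$, $\gamma_N(X)=X^{\rhd\lhd}$. $\mathbf F^+$: universe the closed sets ($\gamma_N(X)=X$), $X\wedge Y=X\cap Y$, $X\vee Y=\gamma_N(X\cup Y)$, $X\cdot Y=\gamma_N(X\circ Y)$ with $X\circ Y=\{x\cdot y\}$, $X\backslash Y=\{z\mid X\circ\{z\}\subseteq Y\}$, $Y/X=\{z\mid \{z\}\circ X\subseteq Y\}$, $!X=\gamma_N(X\cap K)$, unit $\gamma_N(\{\varepsilon\})$, and in the $ruz$ case zero $\{\epsilon\}^{\lhd}$. $\mathbf F_{\mathbf A,\mathbf B}=(G_B,T_B,N_B,K_B)$: $G_B$ the sub-unital-groupoid of $(A,\cdot,1)$ generated by $B$; $U_{G_B}$ the unary linear polynomials over $G_B$ (maps given by a groupoid term with one variable occurring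 exactly once and other leaves in $G_B$, including $\mathrm{id}$); $T_B=U_{G_B}\times B$; $x\,N_B\,(u,b)$ iff $u(x)\le^{\mathbf A}b$; $K_B$ the sub-unital-groupoid generated by $\{!^{\mathbf A}b\mid b\in B,\ !^{\mathbf A}b\in B\}$. *)

Record irlu_groupoid := {
  car :> Type;
  le : car -> car -> Prop;
  meet : car -> car -> car;
  join : car -> car -> car;
  mul : car -> car -> car;
  ldiv : car -> car -> car;
  rdiv : car -> car -> car;
  one : car;
  bang : car -> car;
  le_refl : forall x, le x x;
  le_trans : forall x y z, le x y -> le y z -> le x z;
  le_antisym : forall x y, le x y -> le y x -> x = y;
  meet_glb : forall x y z, le z (meet x y) <-> (le z x /\ le z y);
  join_lub : forall x y z, le (join x y) z <-> (le x z /\ le y z);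
  mul1l : forall x, mul one x = x;
  mul1r : forall x, mul x one = x;
  res_l : forall x y z, le (mul x y) z <-> le y (ldiv x z);
  res_r : forall x y z, le (mul x y) z <-> le x (rdiv z y);
  bang_one : le one (bang one);
  bang_mul : forall x y, le (mul (bang x) (bang y)) (bang (mul x y));
  bang_defl : forall x, le (bang x) x;
  bang_idem : forall x, le (bang x) (bang (bang x));
  bang_mono : forall x y, le x y -> le (bang x) (bang y)
}.

Inductive eqn := Ee | Ec | Ei | Ebc | Ebe | Ebi | Eba1 | Eba2.

Definition holds_in_A (A : irlu_groupoid) (e : eqn) : Prop :=
  let le := le A in let m := mul A in let b := bang A in
  match e with
  | Ee => forall x y : A, le (m x y) (m y x)
  | Ec => forall x : A, le x (m x x)
  | Ei => forall x : A, le x (one A)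
  | Ebc => forall x : A, le (b x) (m (b x) (b x))
  | Ebe => forall x y : A, m (b x) y = m y (b x)
  | Ebi => forall x : A, le (b x) (one A)
  | Eba1 => forall x y z : A, m (b x) (m y z) = m (m (b x) y) z
  | Eba2 => forall x y z : A, m x (m y (b z)) = m (m x y) (b z)
  end.

Section Frame.
Variable A : irlu_groupoid.
Variable B : A -> Prop.   (* the universe of the partial subalgebra B *)

Inductive GB : A -> Prop :=
  | GB_base : forall b, B b -> GB b
  | GB_one : GB (one A)
  | GB_mul : forall x y, GB x -> GB y -> GB (mul A x y).

Inductive KB : A -> Prop :=
  | KB_base : forall b, B b -> B (bang A b) -> KB (bang A b)
  | KB_one : KB (one A)
  | KB_mul : forall x y, KB x -> KB y -> KB (mul A x y).

(* unary linear polynomials: groupoid terms with exactly one occurrence of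
   the variable; the path from the root to the variable *)
Inductive ctx := Hole | CL (g : A) (c : ctx) | CR (c : ctx) (g : A).

Fixpoint plug (c : ctx) (x : A) : A :=
  match c with
  | Hole => x
  | CL g c' => mul A g (plug c' x)
  | CR c' g => mul A (plug c' x) g
  end.

Fixpoint ctx_over_GB (c : ctx) : Prop :=
  match c with
  | Hole => True
  | CL g c' => GB g /\ ctx_over_GB c'
  | CR c' g => ctx_over_GB c' /\ GB g
  end.

Definition TB (t : ctx * A) : Prop := ctx_over_GB (fst t) /\ B (snd t).

Definition NB (x : A) (t : ctx * A) : Prop := le A (plug (fst t) x) (snd t).

Definition rhd (X : A -> Prop) : ctx * A -> Prop :=
  fun t => TB t /\ forall x, X x -> NB x t.
Definition lhd (Y : ctx * A -> Prop) : A -> Prop :=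
  fun g => GB g /\ forall t, Y t -> NB g t.
Definition gammaN (X : A -> Prop) : A -> Prop := lhd (rhd X).

(* universe of F^+ : the closed subsets of G_B *)
Definition closed (X : A -> Prop) : Prop :=
  (forall x, GB x -> (gammaN X x <-> X x)) /\ (forall x, X x -> GB x).

Definition set_le (X Y : A -> Prop) : Prop := forall x, X x -> Y x.
Definition set_eq (X Y : A -> Prop) : Prop := forall x, X x <-> Y x.

Definition circ (X Y : A -> Prop) : A -> Prop :=
  fun z => exists x y, X x /\ Y y /\ z = mul A x y.
Definition Fmul (X Y : A -> Prop) : A -> Prop := gammaN (circ X Y).
Definition Fone : A -> Prop := gammaN (fun z => z = one A).
Definition Fbang (X : A -> Prop) : A -> Prop := gammaN (fun z => X z /\ KB z).

Definition holds_in_Fplus (e : eqn) : Prop :=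
  match e with
  | Ee => forall X Y, closed X -> closed Y -> set_le (Fmul X Y) (Fmul Y X)
  | Ec => forall X, closed X -> set_le X (Fmul X X)
  | Ei => forall X, closed X -> set_le X Fone
  | Ebc => forall X, closed X -> set_le (Fbang X) (Fmul (Fbang X) (Fbang X))
  | Ebe => forall X Y, closed X -> closed Y ->
             set_eq (Fmul (Fbang X) Y) (Fmul Y (Fbang X))
  | Ebi => forall X, closed X -> set_le (Fbang X) Fone
  | Eba1 => forall X Y Z, closed X -> closed Y -> closed Z ->
             set_eq (Fmul (Fbang X) (Fmul Y Z)) (Fmul (Fmul (Fbang X) Y) Z)
  | Eba2 => forall X Y Z, closed X -> closed Y -> closed Z ->
             set_eq (Fmul X (Fmul Y (Fbang Z))) (Fmul (Fmul X Y) (Fbang Z))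
  end.

End Frame.


(* Membership in a closure [gammaN W] is tested against the pairs (c, b) of a
   linear context over G_B and a bound in B.  Since such contexts compose,
   [gammaN] is a nucleus: gammaN S . gammaN T lies in gammaN (S . T), so every
   product of closed sets is generated by products of elements.  An equation of
   A then transfers to F^+ elementwise; the !-equations apply because every
   element of K_B is a fixed point of !, being a product of fixed points. *)

Section Frame.
Variable A : irlu_groupoid.
Variable B : A -> Prop.

Lemma mul_mono_l x x' y : le A x x' -> le A (mul A x y) (mul A x' y).
Proof.
  intro Hx. apply (proj2 (res_r A x y _)).
  apply le_trans with x'; [exact Hx|]. apply (proj1 (res_r A x' y _)). apply le_refl.
Qed.

Lemma mul_mono_r x y y' : le A y y' -> le A (mul A x y) (mul A x y').
Proof.
  intro Hy. apply (proj2 (res_l A x y _)).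
  apply le_trans with y'; [exact Hy|]. apply (proj1 (res_l A x y' _)). apply le_refl.
Qed.

Lemma plug_mono c x y : le A x y -> le A (plug A c x) (plug A c y).
Proof.
  intro Hxy; induction c; simpl.
  - exact Hxy.
  - apply mul_mono_r; assumption.
  - apply mul_mono_l; assumption.
Qed.

Fixpoint ctx_comp (c d : ctx A) : ctx A :=
  match c with
  | Hole _ => d
  | CL _ g c' => CL A g (ctx_comp c' d)
  | CR _ c' g => CR A (ctx_comp c' d) g
  end.

Lemma plug_ctx_comp c d x : plug A (ctx_comp c d) x = plug A c (plug A d x).
Proof. induction c; simpl; congruence. Qed.

Lemma ctx_comp_over_GB c d :
  ctx_over_GB A B c -> ctx_over_GB A B d -> ctx_over_GB A B (ctx_comp c d).
Proof. induction c; simpl; tauto. Qed.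

Lemma KB_bang_fixed k : KB A B k -> bang A k = k.
Proof.
  induction 1; apply le_antisym; try apply bang_defl.
  - apply bang_idem.
  - apply bang_one.
  - eapply le_trans; [|apply bang_mul]. rewrite IHKB1, IHKB2. apply le_refl.
Qed.

Lemma set_le_refl X : set_le A X X.
Proof. intros x Hx; exact Hx. Qed.

Lemma closed_GB X x : closed A B X -> X x -> GB A B x.
Proof. intros HX. apply (proj2 HX). Qed.

Lemma circ_GB S T :
  set_le A S (GB A B) -> set_le A T (GB A B) -> set_le A (circ A S T) (GB A B).
Proof. intros HS HT z [x [y [Hx [Hy ->]]]]. apply GB_mul; auto. Qed.

Lemma gammaN_GB S z : gammaN A B S z -> GB A B z.
Proof. exact (@proj1 _ _). Qed.

Lemma gammaN_elim S z c b :
  gammaN A B S z -> ctx_over_GB A B c -> B b ->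
  (forall s, S s -> le A (plug A c s) b) -> le A (plug A c z) b.
Proof.
  intros [_ Hz] Hc Hb HS. apply (Hz (c, b)). split; [split; assumption|].
  intros s Hs. apply HS, Hs.
Qed.

Lemma gammaN_intro W z :
  GB A B z ->
  (forall c b, ctx_over_GB A B c -> B b ->
     (forall w, W w -> le A (plug A c w) b) -> le A (plug A c z) b) ->
  gammaN A B W z.
Proof.
  intros Gz Hz. split; [exact Gz|]. intros [c b] [[Hc Hb] HW]. apply Hz; auto.
Qed.

Lemma gammaN_of_le W z w : GB A B z -> le A z w -> W w -> gammaN A B W z.
Proof.
  intros Gz Hzw Hw. apply gammaN_intro; [exact Gz|]. intros c b _ _ HW.
  apply le_trans with (plug A c w); [apply plug_mono, Hzw | apply HW, Hw].
Qed.

Lemma gammaN_ext S z : GB A B z -> S z -> gammaN A B S z.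
Proof. intros Gz Sz. apply gammaN_of_le with z; [exact Gz | apply le_refl | exact Sz]. Qed.

Lemma gammaN_least S W :
  set_le A S (gammaN A B W) -> set_le A (gammaN A B S) (gammaN A B W).
Proof.
  intros HSW z Hz. apply gammaN_intro; [exact (gammaN_GB _ _ Hz)|].
  intros c b Hc Hb HW. apply (gammaN_elim S z c b Hz Hc Hb).
  intros s Hs. exact (gammaN_elim W s c b (HSW s Hs) Hc Hb HW).
Qed.

Lemma closed_sub_gammaN X : closed A B X -> set_le A X (gammaN A B X).
Proof. intros HX x Hx. apply gammaN_ext; [exact (closed_GB X x HX Hx) | exact Hx]. Qed.

Lemma gammaN_mul_elim_l S x y c b :
  gammaN A B S x -> GB A B y -> ctx_over_GB A B c -> B b ->
  (forall s, S s -> le A (plug A c (mul A s y)) b) -> le A (plug A c (mul A x y)) b.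
Proof.
  intros Hx Gy Hc Hb HS.
  change (mul A x y) with (plug A (CR A (Hole A) y) x). rewrite <- plug_ctx_comp.
  apply (gammaN_elim S x _ b Hx); [apply ctx_comp_over_GB; simpl; tauto | exact Hb|].
  intros s Hs. rewrite plug_ctx_comp. apply HS, Hs.
Qed.

Lemma gammaN_mul_elim_r T x y c b :
  GB A B x -> gammaN A B T y -> ctx_over_GB A B c -> B b ->
  (forall t, T t -> le A (plug A c (mul A x t)) b) -> le A (plug A c (mul A x y)) b.
Proof.
  intros Gx Hy Hc Hb HT.
  change (mul A x y) with (plug A (CL A x (Hole A)) y). rewrite <- plug_ctx_comp.
  apply (gammaN_elim T y _ b Hy); [apply ctx_comp_over_GB; simpl; tauto | exact Hb|].
  intros t Ht. rewrite plug_ctx_comp. apply HT, Ht.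
Qed.

Lemma circ_gammaN S T :
  set_le A S (GB A B) ->
  set_le A (circ A (gammaN A B S) (gammaN A B T)) (gammaN A B (circ A S T)).
Proof.
  intros HS z [x [y [Hx [Hy ->]]]].
  apply gammaN_intro; [apply GB_mul; eapply gammaN_GB; eassumption|].
  intros c b Hc Hb HST.
  apply (gammaN_mul_elim_l S x y c b Hx (gammaN_GB _ _ Hy) Hc Hb). intros s Hs.
  apply (gammaN_mul_elim_r T s y c b (HS s Hs) Hy Hc Hb). intros t Ht.
  apply HST. exists s, t; auto.
Qed.

Lemma Fmul_sub_gammaN S T X Y W :
  set_le A S (GB A B) ->
  set_le A X (gammaN A B S) -> set_le A Y (gammaN A B T) ->
  set_le A (circ A S T) (gammaN A B W) ->
  set_le A (Fmul A B X Y) (gammaN A B W).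
Proof.
  intros HS HXS HYT HW. apply gammaN_least. intros z [x [y [Hx [Hy ->]]]].
  apply (gammaN_least (circ A S T) W HW), circ_gammaN; [exact HS|].
  exists x, y; auto.
Qed.

Lemma Fmul_sub_gammaN_circ S T X Y :
  set_le A S (GB A B) -> set_le A T (GB A B) ->
  set_le A X (gammaN A B S) -> set_le A Y (gammaN A B T) ->
  set_le A (Fmul A B X Y) (gammaN A B (circ A S T)).
Proof.
  intros HS HT HXS HYT. apply (Fmul_sub_gammaN S T); auto.
  intros z Hz. apply gammaN_ext; [exact (circ_GB S T HS HT z Hz) | exact Hz].
Qed.

Lemma Fmul_of_mem X Y x y :
  GB A B x -> GB A B y -> X x -> Y y -> Fmul A B X Y (mul A x y).
Proof. intros Gx Gy Hx Hy. apply gammaN_ext; [apply GB_mul; auto | exists x, y; auto]. Qed.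

Lemma Fbang_of_KB X k : closed A B X -> X k -> KB A B k -> Fbang A B X k.
Proof. intros HX Hk Kk. apply gammaN_ext; [exact (closed_GB X k HX Hk) | auto]. Qed.

Lemma closed_KB_GB X :
  closed A B X -> set_le A (fun z => X z /\ KB A B z) (GB A B).
Proof. intros HX z [Hz _]. exact (closed_GB X z HX Hz). Qed.

Lemma holds_Fplus_e : holds_in_A A Ee -> holds_in_Fplus A B Ee.
Proof.
  cbn; intros Hcomm X Y HX HY. apply gammaN_least. intros z [x [y [Hx [Hy ->]]]].
  pose proof (closed_GB X x HX Hx) as Gx; pose proof (closed_GB Y y HY Hy) as Gy.
  apply gammaN_of_le with (mul A y x); [apply GB_mul; auto | apply Hcomm | exists y, x; auto].
Qed.

Lemma holds_Fplus_c : holds_in_A A Ec -> holds_in_Fplus A B Ec.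
Proof.
  cbn; intros Hctr X HX x Hx.
  apply gammaN_of_le with (mul A x x); [exact (closed_GB X x HX Hx) | apply Hctr | exists x, x; auto].
Qed.

Lemma holds_Fplus_i : holds_in_A A Ei -> holds_in_Fplus A B Ei.
Proof.
  cbn; intros Hint X HX x Hx.
  apply gammaN_of_le with (one A); [exact (closed_GB X x HX Hx) | apply Hint | reflexivity].
Qed.

Lemma holds_Fplus_bang_c : holds_in_A A Ebc -> holds_in_Fplus A B Ebc.
Proof.
  cbn; intros Hctr X HX. apply gammaN_least. intros z [Hz Kz].
  apply gammaN_of_le with (mul A z z); [exact (closed_GB X z HX Hz) | |].
  - rewrite <- (KB_bang_fixed z Kz). apply Hctr.
  - exists z, z. split; [|split]; auto; apply Fbang_of_KB; auto.
Qed.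

Lemma holds_Fplus_bang_i : holds_in_A A Ebi -> holds_in_Fplus A B Ebi.
Proof.
  cbn; intros Hint X HX. apply gammaN_least. intros z [Hz Kz].
  apply gammaN_of_le with (one A); [exact (closed_GB X z HX Hz) | | reflexivity].
  rewrite <- (KB_bang_fixed z Kz). apply Hint.
Qed.

Lemma holds_Fplus_bang_e : holds_in_A A Ebe -> holds_in_Fplus A B Ebe.
Proof.
  cbn; intros Hcomm X Y HX HY z; split; revert z.
  - apply (Fmul_sub_gammaN _ Y _ _ _ (closed_KB_GB X HX) (set_le_refl _) (closed_sub_gammaN Y HY)).
    intros w [k [y [[Hk Kk] [Hy ->]]]].
    rewrite <- (KB_bang_fixed k Kk), Hcomm, (KB_bang_fixed k Kk).
    apply Fmul_of_mem; eauto using closed_GB, Fbang_of_KB.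
  - apply (Fmul_sub_gammaN Y _ _ _ _ (proj2 HY) (closed_sub_gammaN Y HY) (set_le_refl _)).
    intros w [y [k [Hy [[Hk Kk] ->]]]].
    rewrite <- (KB_bang_fixed k Kk), <- Hcomm, (KB_bang_fixed k Kk).
    apply Fmul_of_mem; eauto using closed_GB, Fbang_of_KB.
Qed.

Lemma holds_Fplus_bang_a1 : holds_in_A A Eba1 -> holds_in_Fplus A B Eba1.
Proof.
  cbn; intros Hassoc X Y Z HX HY HZ w; split; revert w.
  - apply (Fmul_sub_gammaN _ (circ A Y Z) _ _ _ (closed_KB_GB X HX)
             (set_le_refl _) (set_le_refl _)).
    intros w [k [v [[Hk Kk] [[y [z [Hy [Hz ->]]]] ->]]]].
    assert (Gk : GB A B k) by exact (closed_GB X k HX Hk).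
    assert (Gy : GB A B y) by exact (closed_GB Y y HY Hy).
    rewrite <- (KB_bang_fixed k Kk), Hassoc, (KB_bang_fixed k Kk).
    apply Fmul_of_mem; [apply GB_mul; auto | exact (closed_GB Z z HZ Hz) | | exact Hz].
    apply Fmul_of_mem; auto. apply Fbang_of_KB; auto.
  - apply (Fmul_sub_gammaN (circ A (fun z => X z /\ KB A B z) Y) Z).
    + apply circ_GB; [exact (closed_KB_GB X HX) | exact (proj2 HY)].
    + apply Fmul_sub_gammaN_circ;
        [exact (closed_KB_GB X HX) | exact (proj2 HY) | apply set_le_refl |
         exact (closed_sub_gammaN Y HY)].
    + exact (closed_sub_gammaN Z HZ).
    + intros w [v [z [[k [y [[Hk Kk] [Hy ->]]]] [Hz ->]]]].
      assert (Gy : GB A B y) by exact (closed_GB Y y HY Hy).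
      assert (Gz : GB A B z) by exact (closed_GB Z z HZ Hz).
      rewrite <- (KB_bang_fixed k Kk), <- Hassoc, (KB_bang_fixed k Kk).
      apply Fmul_of_mem; [exact (closed_GB X k HX Hk) | apply GB_mul; auto | |].
      * apply Fbang_of_KB; auto.
      * apply Fmul_of_mem; auto.
Qed.

Lemma holds_Fplus_bang_a2 : holds_in_A A Eba2 -> holds_in_Fplus A B Eba2.
Proof.
  cbn; intros Hassoc X Y Z HX HY HZ w; split; revert w.
  - apply (Fmul_sub_gammaN X (circ A Y (fun z => Z z /\ KB A B z))).
    + exact (proj2 HX).
    + exact (closed_sub_gammaN X HX).
    + apply Fmul_sub_gammaN_circ;
        [exact (proj2 HY) | exact (closed_KB_GB Z HZ) |
         exact (closed_sub_gammaN Y HY) | apply set_le_refl].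
    + intros w [x [v [Hx [[y [k [Hy [[Hk Kk] ->]]]] ->]]]].
      assert (Gx : GB A B x) by exact (closed_GB X x HX Hx).
      assert (Gy : GB A B y) by exact (closed_GB Y y HY Hy).
      rewrite <- (KB_bang_fixed k Kk), Hassoc, (KB_bang_fixed k Kk).
      apply Fmul_of_mem; [apply GB_mul; auto | exact (closed_GB Z k HZ Hk) | |].
      * apply Fmul_of_mem; auto.
      * apply Fbang_of_KB; auto.
  - apply (Fmul_sub_gammaN (circ A X Y) _ _ _ _ (circ_GB X Y (proj2 HX) (proj2 HY))
             (set_le_refl _) (set_le_refl _)).
    intros w [v [k [[x [y [Hx [Hy ->]]]] [[Hk Kk] ->]]]].
    assert (Gy : GB A B y) by exact (closed_GB Y y HY Hy).
    assert (Gk : GB A B k) by exact (closed_GB Z k HZ Hk).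
    rewrite <- (KB_bang_fixed k Kk), <- Hassoc, (KB_bang_fixed k Kk).
    apply Fmul_of_mem; [exact (closed_GB X x HX Hx) | apply GB_mul; auto | exact Hx |].
    apply Fmul_of_mem; auto. apply Fbang_of_KB; auto.
Qed.

End Frame.

Theorem mainTheorem9 (A : irlu_groupoid) (B : A -> Prop) (e : eqn) :
  holds_in_A A e -> holds_in_Fplus A B e.
Proof.
  destruct e.
  - apply holds_Fplus_e.
  - apply holds_Fplus_c.
  - apply holds_Fplus_i.
  - apply holds_Fplus_bang_c.
  - apply holds_Fplus_bang_e.
  - apply holds_Fplus_bang_i.
  - apply holds_Fplus_bang_a1.
  - apply holds_Fplus_bang_a2.
Qed.
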